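(* Let $\phi(x,y,z)=\alpha x+\beta y+\gamma z$ with $\alpha,\beta,\gamma\in\mathbb{R}$ not all zero, and let $S\subset\mathbb{R}^3$ be a surface of Riemann type foliated by circles (or arcs of circles) lying in parallel planes, all orthogonal to a nonzero vector $\vec w\in\mathbb{R}^3$. If $S$ is $\phi$-minimal, then $\vec w$ is proportional to the $\phi$-density vector $\vec v=(\alpha,\beta,\gamma)$, and $S$ is a surface of revolution whose axis is parallel to $\vec v$.
   Context: For a smooth oriented surface $S\subset\mathbb{R}^3$ with unit normal $N$, $H$ denotes its mean curvature normalized so that the mean curvature vector is $\Delta_S X=2HN$ (for a graph $z=u(x,y)$ with upward normal, $2H=\operatorname{div}(\nabla u/\sqrt{1+|\nabla u|^2})$). For $\phi(x,y,z)=\alpha x+\beta y+\gamma z$, the $\phi$-density vector is $\vec v=(\alpha,\beta,\gamma)$ and the $\phi$-mean curvature is $H_\phi=H-\tfrac12\langle N,\vec v\rangle$; $S$ is $\phi$-minimal if $H_\phi\equiv0$. A surface of Riemann type is a surface generated by a smooth one-parameter family of circles (or arcs of circles) all lying in parallel planes; e.g. if the planes are parallel to the $xy$-plane, locally $X(s,t)=(a(s),b(s),s)+r(s)(\cos t,\sin t,0)$ with $a,b,r$ smooth, $r>0$, $t$ in an interval. The result is local. *)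

From Stdlib Require Import Reals.
Open Scope R_scope.

Record V3 := mkV { vx : R; vy : R; vz : R }.

Definition vzero : V3 := mkV 0 0 0.
Definition vadd (p q : V3) : V3 := mkV (vx p + vx q) (vy p + vy q) (vz p + vz q).
Definition vscale (c : R) (p : V3) : V3 := mkV (c * vx p) (c * vy p) (c * vz p).
Definition dot (p q : V3) : R := vx p * vx q + vy p * vy q + vz p * vz q.
Definition cross (p q : V3) : V3 :=
  mkV (vy p * vz q - vz p * vy q)
      (vz p * vx q - vx p * vz q)
      (vx p * vy q - vy p * vx q).
Definition vnorm (p : V3) : R := sqrt (dot p p).

Definition smooth_on (f : R -> R) (s0 s1 : R) : Prop :=
  exists D : nat -> R -> R, D O = f /\
    forall n x, s0 < x < s1 -> derivable_pt_lim (D n) x (D (S n) x).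

Definition pd_s (X Y : R -> R -> V3) (s t : R) : Prop :=
  derivable_pt_lim (fun s' => vx (X s' t)) s (vx (Y s t)) /\
  derivable_pt_lim (fun s' => vy (X s' t)) s (vy (Y s t)) /\
  derivable_pt_lim (fun s' => vz (X s' t)) s (vz (Y s t)).
Definition pd_t (X Y : R -> R -> V3) (s t : R) : Prop :=
  derivable_pt_lim (fun t' => vx (X s t')) t (vx (Y s t)) /\
  derivable_pt_lim (fun t' => vy (X s t')) t (vy (Y s t)) /\
  derivable_pt_lim (fun t' => vz (X s t')) t (vz (Y s t)).

(* Mean curvature of a parametrized surface from its first and second
   derivatives, with unit normal N = (Xs x Xt)/|Xs x Xt|, normalized so that
   Delta X = 2 H N:  H = (E n - 2 F m + G l) / (2 (E G - F^2)). *)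
Definition unit_normal (Xs Xt : V3) : V3 := vscale (/ vnorm (cross Xs Xt)) (cross Xs Xt).
Definition mean_curv (Xs Xt Xss Xst Xtt : V3) : R :=
  let N := unit_normal Xs Xt in
  let E := dot Xs Xs in let F := dot Xs Xt in let G := dot Xt Xt in
  let l := dot Xss N in let m := dot Xst N in let n := dot Xtt N in
  (E * n - 2 * F * m + G * l) / (2 * (E * G - F * F)).

Definition phi_mean_curv (v : V3) (Xs Xt Xss Xst Xtt : V3) : R :=
  mean_curv Xs Xt Xss Xst Xtt - / 2 * dot (unit_normal Xs Xt) v.

Definition phi_minimal_param (X : R -> R -> V3) (v : V3) (s0 s1 t0 t1 : R) : Prop :=
  exists Xs Xt Xss Xst Xtt : R -> R -> V3,
    forall s t, s0 < s < s1 -> t0 < t < t1 ->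
      pd_s X Xs s t /\ pd_t X Xt s t /\
      pd_s Xs Xss s t /\ pd_t Xs Xst s t /\ pd_t Xt Xtt s t /\
      cross (Xs s t) (Xt s t) <> vzero /\
      phi_mean_curv v (Xs s t) (Xt s t) (Xss s t) (Xst s t) (Xtt s t) = 0.

(* Riemann-type surface in planes orthogonal to u := e1 x e2 (e1, e2 orthonormal):
   circle centers c(s) = a(s) e1 + b(s) e2 + s u, radius r(s). *)
Definition riemann_center (a b : R -> R) (e1 e2 : V3) (s : R) : V3 :=
  vadd (vadd (vscale (a s) e1) (vscale (b s) e2)) (vscale s (cross e1 e2)).
Definition riemann_X (a b r : R -> R) (e1 e2 : V3) (s t : R) : V3 :=
  vadd (riemann_center a b e1 e2 s)
       (vscale (r s) (vadd (vscale (cos t) e1) (vscale (sin t) e2))).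

(** In the orthonormal frame (e1, e2, e1 x e2) the surface reads
    X(s,t) = (a + r cos t, b + r sin t, s).  Clearing the denominator
    2 |Xs x Xt|^3 of H_phi and dividing by r^2, phi-minimality says that a
    trigonometric polynomial of degree 3 in t, with coefficients depending on
    s, vanishes on an interval; hence all seven coefficients vanish.  Let
    (p, q, g) be the frame coordinates of the density vector.  The
    coefficients of cos 2t, sin 2t, cos 3t, sin 3t force (a'^2 + b'^2) r' = 0;
    differentiating, wherever a'^2 + b'^2 <> 0 also r'' = 0 and the constant
    coefficient becomes 1 + a'^2 + b'^2 <> 0, so a' = b' = 0 everywhere.  The
    coefficients of cos t and sin t then reduce to r (1 + r'^2) p and
    r (1 + r'^2) q, so p = q = 0: the density vector is normal to the planes
    of the circles, and the centres run along a line parallel to it. *)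

From Stdlib Require Import Reals Lra Nsatz.
From Coquelicot Require Import Coquelicot.
Open Scope R_scope.

Lemma V3_eq (p q : V3) : vx p = vx q -> vy p = vy q -> vz p = vz q -> p = q.
Proof. destruct p, q; simpl; intros; subst; reflexivity. Qed.

Lemma dot_vscale_l (k : R) (p q : V3) : dot (vscale k p) q = k * dot p q.
Proof. unfold dot, vscale; simpl; ring. Qed.

Lemma dot_vscale_r (k : R) (p q : V3) : dot p (vscale k q) = k * dot p q.
Proof. unfold dot, vscale; simpl; ring. Qed.

Lemma dot_self_pos (p : V3) : p <> vzero -> 0 < dot p p.
Proof.
  intros Hp. destruct p as [x y z]. unfold dot; simpl.
  destruct (Req_dec x 0), (Req_dec y 0), (Req_dec z 0); subst; try nra.
  exfalso; apply Hp; reflexivity.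
Qed.

Lemma dot_cross_self (p q : V3) :
  dot (cross p q) (cross p q) = dot p p * dot q q - dot p q * dot p q.
Proof. unfold dot, cross; simpl; ring. Qed.

Definition frame (e1 e2 p : V3) : V3 :=
  vadd (vadd (vscale (vx p) e1) (vscale (vy p) e2)) (vscale (vz p) (cross e1 e2)).

Lemma frame_vzero (e1 e2 : V3) : frame e1 e2 vzero = vzero.
Proof. apply V3_eq; unfold frame, vadd, vscale; simpl; ring. Qed.

Lemma vscale_frame (e1 e2 : V3) (k : R) (p : V3) :
  vscale k (frame e1 e2 p) = frame e1 e2 (vscale k p).
Proof. apply V3_eq; unfold frame, vadd, vscale; simpl; ring. Qed.

Section OrthonormalFrame.

Variables e1 e2 : V3.
Hypotheses (he1 : dot e1 e1 = 1) (he2 : dot e2 e2 = 1) (he12 : dot e1 e2 = 0).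

Lemma dot_frame (p q : V3) : dot (frame e1 e2 p) (frame e1 e2 q) = dot p q.
Proof.
  destruct e1 as [a1 a2 a3], e2 as [b1 b2 b3], p, q.
  revert he1 he2 he12; unfold dot, frame, cross, vadd, vscale; simpl; intros; nsatz.
Qed.

Lemma cross_frame (p q : V3) :
  cross (frame e1 e2 p) (frame e1 e2 q) = frame e1 e2 (cross p q).
Proof.
  destruct e1 as [a1 a2 a3], e2 as [b1 b2 b3], p, q.
  revert he1 he2 he12; unfold dot; simpl; intros.
  apply V3_eq; unfold frame, cross, vadd, vscale; simpl; nsatz.
Qed.

Lemma frame_coords (x : V3) :
  x = frame e1 e2 (mkV (dot x e1) (dot x e2) (dot x (cross e1 e2))).
Proof.
  destruct e1 as [a1 a2 a3], e2 as [b1 b2 b3], x.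
  revert he1 he2 he12; unfold dot; simpl; intros.
  apply V3_eq; unfold frame, cross, vadd, vscale; simpl; nsatz.
Qed.

Lemma phi_mean_curv_frame (v Xs Xt Xss Xst Xtt : V3) :
  phi_mean_curv (frame e1 e2 v) (frame e1 e2 Xs) (frame e1 e2 Xt)
    (frame e1 e2 Xss) (frame e1 e2 Xst) (frame e1 e2 Xtt)
  = phi_mean_curv v Xs Xt Xss Xst Xtt.
Proof.
  unfold phi_mean_curv, mean_curv, unit_normal, vnorm.
  rewrite cross_frame, dot_frame, vscale_frame, !dot_frame.
  reflexivity.
Qed.

End OrthonormalFrame.

Definition phi_mean_numerator (v Xs Xt Xss Xst Xtt : V3) : R :=
  let c := cross Xs Xt in
  dot Xs Xs * dot Xtt c - 2 * dot Xs Xt * dot Xst c + dot Xt Xt * dot Xss c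
  - dot c c * dot c v.

Lemma phi_mean_curv_eq0_numerator (v Xs Xt Xss Xst Xtt : V3) :
  cross Xs Xt <> vzero -> phi_mean_curv v Xs Xt Xss Xst Xtt = 0 ->
  phi_mean_numerator v Xs Xt Xss Xst Xtt = 0.
Proof.
  intros Hc H.
  pose proof (dot_self_pos _ Hc) as Hpos.
  pose proof (sqrt_lt_R0 _ Hpos) as Hsqrt.
  assert (Hcurv : phi_mean_curv v Xs Xt Xss Xst Xtt =
    phi_mean_numerator v Xs Xt Xss Xst Xtt
    / (2 * dot (cross Xs Xt) (cross Xs Xt) * sqrt (dot (cross Xs Xt) (cross Xs Xt)))).
  { unfold phi_mean_curv, mean_curv, phi_mean_numerator, unit_normal, vnorm.
    rewrite !dot_vscale_r, dot_vscale_l, <- dot_cross_self.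
    field; lra. }
  rewrite Hcurv in H.
  apply (Rmult_eq_reg_r (/ (2 * dot (cross Xs Xt) (cross Xs Xt)
                             * sqrt (dot (cross Xs Xt) (cross Xs Xt))))).
  - rewrite Rmult_0_l. exact H.
  - apply Rinv_neq_0_compat. nra.
Qed.

(** * The equation along a circle, and its Fourier coefficients *)

Definition riemann_phi_poly (r r1 r2 a1 a2 b1 b2 p q g c s : R) : R :=
  let k := r1 + a1 * c + b1 * s in
  1 + (a1 + r1 * c) ^ 2 + (b1 + r1 * s) ^ 2 - r * (r2 + a2 * c + b2 * s)
  - r * (1 + k ^ 2) * (g * k - p * c - q * s).

(* Here [Xs x Xt = r (-c, -s, r1 (c^2 + s^2) + a1 c + b1 s)]; keeping [c^2 + s^2] as a
   parameter [n] makes the identity polynomial before the circle equation is used. *)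
Lemma phi_mean_numerator_circle (r r1 r2 a1 a2 b1 b2 p q g c s : R) :
  c ^ 2 + s ^ 2 = 1 ->
  phi_mean_numerator (mkV p q g)
    (mkV (a1 + r1 * c) (b1 + r1 * s) 1) (mkV (- (r * s)) (r * c) 0)
    (mkV (a2 + r2 * c) (b2 + r2 * s) 0) (mkV (- (r1 * s)) (r1 * c) 0)
    (mkV (- (r * c)) (- (r * s)) 0)
  = r ^ 2 * riemann_phi_poly r r1 r2 a1 a2 b1 b2 p q g c s.
Proof.
  intros H. unfold phi_mean_numerator, riemann_phi_poly, dot, cross; simpl.
  transitivity (r ^ 2 * (fun n => let k := r1 * n + a1 * c + b1 * s in
    n * ((a1 + r1 * c) ^ 2 + (b1 + r1 * s) ^ 2 + 1) - r * n * (r2 * n + a2 * c + b2 * s)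
    - r * (n + k ^ 2) * (g * k - p * c - q * s)) (c ^ 2 + s ^ 2)).
  - cbv beta zeta. ring.
  - cbv beta zeta. rewrite H. ring.
Qed.

Section FourierCoefficients.

Variables (r r1 r2 a1 a2 b1 b2 p q g : R).

Let rho := a1 ^ 2 + b1 ^ 2.
Let m1 := g * a1 - p.
Let m2 := g * b1 - q.
Let u := (a1 ^ 2 - b1 ^ 2) / 2.
Let w := a1 * b1.

Definition fourier_c0 : R :=
  1 + rho + r1 ^ 2 - r * r2
  - r * ((1 + r1 ^ 2 + rho / 2) * g * r1 + r1 * (a1 * m1 + b1 * m2)).
Definition fourier_c1 : R :=
  2 * r1 * a1 - r * a2
  - r * ((1 + r1 ^ 2) * m1 + 2 * r1 ^ 2 * g * a1 + rho * m1 / 2 + u * m1 / 2 + w * m2 / 2).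
Definition fourier_s1 : R :=
  2 * r1 * b1 - r * b2
  - r * ((1 + r1 ^ 2) * m2 + 2 * r1 ^ 2 * g * b1 + rho * m2 / 2 - u * m2 / 2 + w * m1 / 2).
Definition fourier_c2 : R := - r * (r1 * (a1 * m1 - b1 * m2) + g * r1 * u).
Definition fourier_s2 : R := - r * (r1 * (a1 * m2 + b1 * m1) + g * r1 * w).
Definition fourier_c3 : R := - r * (u * m1 - w * m2) / 2.
Definition fourier_s3 : R := - r * (u * m2 + w * m1) / 2.

End FourierCoefficients.

Lemma unit_circle_rational_param (c s : R) : c ^ 2 + s ^ 2 = 1 ->
  (c = -1 /\ s = 0) \/
  exists u, c = (1 - u ^ 2) / (1 + u ^ 2) /\ s = 2 * u / (1 + u ^ 2).
Proof.
  intros H. destruct (Req_dec c (-1)) as [Hc | Hc].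
  - left. split; [exact Hc | subst c; nra].
  - right. exists (s / (1 + c)).
    assert (1 + c <> 0) by lra.
    assert (Hn : 1 + (s / (1 + c)) ^ 2 = 2 / (1 + c)).
    { field_simplify_eq; [nra | lra]. }
    rewrite Hn. split; field_simplify_eq; try lra; nra.
Qed.

Lemma riemann_phi_poly_fourier (r r1 r2 a1 a2 b1 b2 p q g c s : R) :
  c ^ 2 + s ^ 2 = 1 ->
  riemann_phi_poly r r1 r2 a1 a2 b1 b2 p q g c s =
  fourier_c0 r r1 r2 a1 b1 p q g
  + (fourier_c1 r r1 a1 a2 b1 p q g * c + fourier_s1 r r1 a1 b1 b2 p q g * s)
  + (fourier_c2 r r1 a1 b1 p q g * (c ^ 2 - s ^ 2)
     + fourier_s2 r r1 a1 b1 p q g * (2 * s * c))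
  + (fourier_c3 r a1 b1 p q g * (4 * c ^ 3 - 3 * c)
     + fourier_s3 r a1 b1 p q g * (3 * s - 4 * s ^ 3)).
Proof.
  intros H.
  unfold riemann_phi_poly, fourier_c0, fourier_c1, fourier_s1, fourier_c2, fourier_s2,
    fourier_c3, fourier_s3.
  destruct (unit_circle_rational_param c s H) as [[-> ->] | [u [-> ->]]].
  - field.
  - field. nra.
Qed.

Definition vanishes_on (lo hi : R) (f : R -> R) : Prop :=
  forall x, lo < x < hi -> f x = 0.

Lemma derivable_pt_lim_unique_on (lo hi x l m : R) (f g : R -> R) :
  lo < x < hi -> (forall y, lo < y < hi -> f y = g y) ->
  derivable_pt_lim f x l -> derivable_pt_lim g x m -> l = m.
Proof.
  intros Hx Hfg Hf Hg.
  apply (uniqueness_limite g x); [|exact Hg].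
  apply is_derive_Reals, (is_derive_ext_loc f); [|now apply is_derive_Reals].
  apply (locally_interval _ x lo hi); simpl; try lra.
  intros y Hlo Hhi. apply Hfg. lra.
Qed.

Lemma vanishes_on_deriv (lo hi : R) (f f' : R -> R) :
  vanishes_on lo hi f -> (forall x, lo < x < hi -> derivable_pt_lim f x (f' x)) ->
  vanishes_on lo hi f'.
Proof.
  intros Hf Hd x Hx.
  apply (derivable_pt_lim_unique_on lo hi x _ _ f (fun _ => 0) Hx Hf (Hd x Hx)).
  apply derivable_pt_lim_const.
Qed.

Lemma null_derivative_on (lo hi : R) (f f' : R -> R) :
  (forall x, lo < x < hi -> derivable_pt_lim f x (f' x)) -> vanishes_on lo hi f' ->
  forall x y, lo < x < hi -> lo < y < hi -> f x = f y.
Proof.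
  intros Hd H0.
  assert (Hlt : forall x y, lo < x < hi -> lo < y < hi -> x < y -> f x = f y).
  { intros x y Hx Hy Hxy.
    destruct (MVT_cor2 f f' x y Hxy) as (c & Hc & Hcxy); [intros; apply Hd; lra|].
    rewrite H0 in Hc by lra. lra. }
  intros x y Hx Hy.
  destruct (Rtotal_order x y) as [h | [-> | h]]; [auto | reflexivity | symmetry; auto].
Qed.

(** * Trigonometric polynomials of degree 3 *)

Definition trig3 (A0 A1 B1 A2 B2 A3 B3 t : R) : R :=
  A0 + (A1 * cos t + B1 * sin t) + (A2 * cos (2 * t) + B2 * sin (2 * t))
  + (A3 * cos (3 * t) + B3 * sin (3 * t)).

Lemma cos_3a (t : R) : cos (3 * t) = 4 * cos t ^ 3 - 3 * cos t.
Proof.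
  replace (3 * t) with (2 * t + t) by ring. rewrite cos_plus, cos_2a, sin_2a.
  assert (Hs : sin t ^ 2 = 1 - cos t ^ 2) by (pose proof (sin2_cos2 t); unfold Rsqr in *; lra).
  transitivity (cos t * (cos t ^ 2 - 3 * sin t ^ 2)); [ring | rewrite Hs; ring].
Qed.

Lemma sin_3a (t : R) : sin (3 * t) = 3 * sin t - 4 * sin t ^ 3.
Proof.
  replace (3 * t) with (2 * t + t) by ring. rewrite sin_plus, cos_2a, sin_2a.
  assert (Hc : cos t ^ 2 = 1 - sin t ^ 2) by (pose proof (sin2_cos2 t); unfold Rsqr in *; lra).
  transitivity (sin t * (3 * cos t ^ 2 - sin t ^ 2)); [ring | rewrite Hc; ring].
Qed.

Lemma trig3_derivable (A0 A1 B1 A2 B2 A3 B3 t : R) :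
  derivable_pt_lim (trig3 A0 A1 B1 A2 B2 A3 B3) t
    (trig3 0 B1 (- A1) (2 * B2) (- (2 * A2)) (3 * B3) (- (3 * A3)) t).
Proof. apply is_derive_Reals. unfold trig3. auto_derive; [exact I | ring]. Qed.

(* [f'' + k f] multiplies the harmonic of order [n] by [k - n^2]. *)
Lemma vanishes_on_trig3_shift (lo hi k A0 A1 B1 A2 B2 A3 B3 : R) :
  vanishes_on lo hi (trig3 A0 A1 B1 A2 B2 A3 B3) ->
  vanishes_on lo hi (trig3 (k * A0) ((k - 1) * A1) ((k - 1) * B1)
    ((k - 4) * A2) ((k - 4) * B2) ((k - 9) * A3) ((k - 9) * B3)).
Proof.
  intros H.
  pose proof (vanishes_on_deriv _ _ _ _ H (fun t _ => trig3_derivable _ _ _ _ _ _ _ t)) as H1.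
  pose proof (vanishes_on_deriv _ _ _ _ H1 (fun t _ => trig3_derivable _ _ _ _ _ _ _ t)) as H2.
  intros t Ht.
  transitivity (trig3 0 (- A1) (- B1) (2 * (- (2 * A2))) (- (2 * (2 * B2)))
                  (3 * (- (3 * A3))) (- (3 * (3 * B3))) t
                + k * trig3 A0 A1 B1 A2 B2 A3 B3 t).
  - unfold trig3. ring.
  - rewrite (H2 t Ht), (H t Ht). ring.
Qed.

Lemma harmonic_eq0 (lo hi n A B : R) : lo < hi -> n <> 0 ->
  vanishes_on lo hi (fun t => A * cos (n * t) + B * sin (n * t)) -> A = 0 /\ B = 0.
Proof.
  intros Hlh Hn H.
  assert (H' : vanishes_on lo hi (fun t => n * (B * cos (n * t) - A * sin (n * t)))).
  { apply (vanishes_on_deriv _ _ _ _ H). intros t _.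
    apply is_derive_Reals. auto_derive; [exact I | ring]. }
  set (m := (lo + hi) / 2). assert (Hm : lo < m < hi) by (unfold m; lra).
  specialize (H m Hm). specialize (H' m Hm). cbv beta in H, H'.
  apply Rmult_integral in H' as [H' | H']; [contradiction |].
  pose proof (sin2_cos2 (n * m)) as Hcs. unfold Rsqr in Hcs.
  set (c := cos (n * m)) in *. set (s := sin (n * m)) in *.
  split.
  - transitivity (c * (A * c + B * s) - s * (B * c - A * s)).
    + transitivity (A * (s * s + c * c)); [rewrite Hcs | ]; ring.
    + rewrite H, H'. ring.
  - transitivity (s * (A * c + B * s) + c * (B * c - A * s)).
    + transitivity (B * (s * s + c * c)); [rewrite Hcs | ]; ring.
    + rewrite H, H'. ring.
Qed.

(* Annihilate the harmonics from the top down with [f'' + 9 f], [f'' + 4 f], [f'' + f]. *)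
Lemma trig3_eq0 (lo hi A0 A1 B1 A2 B2 A3 B3 : R) : lo < hi ->
  vanishes_on lo hi (trig3 A0 A1 B1 A2 B2 A3 B3) ->
  A0 = 0 /\ A1 = 0 /\ B1 = 0 /\ A2 = 0 /\ B2 = 0 /\ A3 = 0 /\ B3 = 0.
Proof.
  intros Hlh H.
  pose proof (vanishes_on_trig3_shift _ _ 9 _ _ _ _ _ _ _ H) as H9.
  pose proof (vanishes_on_trig3_shift _ _ 4 _ _ _ _ _ _ _ H9) as H4.
  pose proof (vanishes_on_trig3_shift _ _ 1 _ _ _ _ _ _ _ H4) as H1.
  assert (HA0 : A0 = 0).
  { assert (Hm : lo < (lo + hi) / 2 < hi) by lra.
    specialize (H1 _ Hm). unfold trig3 in H1. ring_simplify in H1. lra. }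
  subst A0.
  assert (HAB1 : A1 = 0 /\ B1 = 0).
  { assert (Z : vanishes_on lo hi (fun t => (24 * A1) * cos (1 * t) + (24 * B1) * sin (1 * t))).
    { intros t Ht. rewrite <- (H4 t Ht), Rmult_1_l. unfold trig3. ring. }
    destruct (harmonic_eq0 _ _ _ _ _ Hlh R1_neq_R0 Z). lra. }
  destruct HAB1; subst A1 B1.
  assert (HAB2 : A2 = 0 /\ B2 = 0).
  { assert (Z : vanishes_on lo hi (fun t => (5 * A2) * cos (2 * t) + (5 * B2) * sin (2 * t))).
    { intros t Ht. rewrite <- (H9 t Ht). unfold trig3. ring. }
    assert (H2n : 2 <> 0) by lra.
    destruct (harmonic_eq0 _ _ _ _ _ Hlh H2n Z). lra. }
  destruct HAB2; subst A2 B2.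
  assert (HAB3 : A3 = 0 /\ B3 = 0).
  { assert (H3n : 3 <> 0) by lra.
    apply (harmonic_eq0 _ _ _ _ _ Hlh H3n).
    intros t Ht. rewrite <- (H t Ht). unfold trig3. ring. }
  destruct HAB3. repeat split; auto.
Qed.

Lemma riemann_phi_poly_trig3 (r r1 r2 a1 a2 b1 b2 p q g t : R) :
  riemann_phi_poly r r1 r2 a1 a2 b1 b2 p q g (cos t) (sin t) =
  trig3 (fourier_c0 r r1 r2 a1 b1 p q g)
    (fourier_c1 r r1 a1 a2 b1 p q g) (fourier_s1 r r1 a1 b1 b2 p q g)
    (fourier_c2 r r1 a1 b1 p q g) (fourier_s2 r r1 a1 b1 p q g)
    (fourier_c3 r a1 b1 p q g) (fourier_s3 r a1 b1 p q g) t.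
Proof.
  pose proof (sin2_cos2 t) as H. unfold Rsqr in H.
  rewrite riemann_phi_poly_fourier by lra.
  unfold trig3. rewrite cos_2a, sin_2a, cos_3a, sin_3a. ring.
Qed.

Lemma fourier_high_eq0 (r r1 a1 b1 p q g : R) :
  0 < r -> ~ (p = 0 /\ q = 0 /\ g = 0) ->
  fourier_c2 r r1 a1 b1 p q g = 0 -> fourier_s2 r r1 a1 b1 p q g = 0 ->
  fourier_c3 r a1 b1 p q g = 0 -> fourier_s3 r a1 b1 p q g = 0 ->
  (a1 ^ 2 + b1 ^ 2) * r1 = 0.
Proof.
  unfold fourier_c2, fourier_s2, fourier_c3, fourier_s3.
  set (u := (a1 ^ 2 - b1 ^ 2) / 2). set (w := a1 * b1).
  set (m1 := g * a1 - p). set (m2 := g * b1 - q).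
  intros Hr Hpqg H2 H2' H3 H3'.
  destruct (Req_dec (a1 ^ 2 + b1 ^ 2) 0) as [h | h]; [rewrite h; ring |].
  assert (Huw : 0 < u ^ 2 + w ^ 2).
  { assert (E : u ^ 2 + w ^ 2 = (a1 ^ 2 + b1 ^ 2) ^ 2 / 4) by (unfold u, w; field).
    rewrite E. nra. }
  assert (E1 : u * m1 - w * m2 = 0) by nra.
  assert (E2 : u * m2 + w * m1 = 0) by nra.
  (* [(u^2 + w^2) (m1^2 + m2^2)] is the sum of the squares of [E1] and [E2]. *)
  assert (Hm : m1 = 0 /\ m2 = 0).
  { assert (Hsq : (u ^ 2 + w ^ 2) * (m1 ^ 2 + m2 ^ 2) = 0).
    { transitivity ((u * m1 - w * m2) ^ 2 + (u * m2 + w * m1) ^ 2); [ring |].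
      rewrite E1, E2. ring. }
    apply Rmult_integral in Hsq as [Hsq | Hsq]; [lra | split; nra]. }
  destruct Hm as [Hm1 Hm2]. rewrite Hm1, Hm2 in H2, H2'.
  assert (Hgr : g * r1 = 0).
  { assert (F1 : g * r1 * u = 0) by nra. assert (F2 : g * r1 * w = 0) by nra.
    assert (Hsq : (g * r1) ^ 2 * (u ^ 2 + w ^ 2) = 0).
    { transitivity ((g * r1 * u) ^ 2 + (g * r1 * w) ^ 2); [ring |].
      rewrite F1, F2. ring. }
    apply Rmult_integral in Hsq as [Hsq | Hsq]; [nra | lra]. }
  apply Rmult_integral in Hgr as [Hg | Hr1].
  - exfalso. apply Hpqg. unfold m1, m2 in *. subst g. lra.
  - rewrite Hr1. ring.
Qed.

Lemma fourier_c0_stationary_radius (r a1 b1 p q g : R) :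
  fourier_c0 r 0 0 a1 b1 p q g = 1 + a1 ^ 2 + b1 ^ 2.
Proof. unfold fourier_c0. field. Qed.

Lemma fourier_c1_fixed_centre (r r1 p q g : R) :
  fourier_c1 r r1 0 0 0 p q g = r * (1 + r1 ^ 2) * p.
Proof. unfold fourier_c1. field. Qed.

Lemma fourier_s1_fixed_centre (r r1 p q g : R) :
  fourier_s1 r r1 0 0 0 p q g = r * (1 + r1 ^ 2) * q.
Proof. unfold fourier_s1. field. Qed.

Definition has_vderiv (f : R -> V3) (x : R) (d : V3) : Prop :=
  derivable_pt_lim (fun y => vx (f y)) x (vx d) /\
  derivable_pt_lim (fun y => vy (f y)) x (vy d) /\
  derivable_pt_lim (fun y => vz (f y)) x (vz d).

Lemma derivable_pt_lim_mul_const (f : R -> R) (x l k : R) :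
  derivable_pt_lim f x l -> derivable_pt_lim (fun y => f y * k) x (l * k).
Proof.
  intros Hf. replace (l * k) with (l * k + f x * 0) by ring.
  apply (derivable_pt_lim_mult f (fun _ => k)); [exact Hf | apply derivable_pt_lim_const].
Qed.

Lemma derivable_pt_lim_add_mul (f g : R -> R) (x f' g' k : R) :
  derivable_pt_lim f x f' -> derivable_pt_lim g x g' ->
  derivable_pt_lim (fun y => f y + g y * k) x (f' + g' * k).
Proof.
  intros Hf Hg. apply (derivable_pt_lim_plus f (fun y => g y * k)); [exact Hf |].
  now apply derivable_pt_lim_mul_const.
Qed.

Lemma has_vderiv_frame_unique (e1 e2 : V3) (lo hi u : R) (f : R -> V3)
    (x y z : R -> R) (x' y' z' : R) (d : V3) :
  lo < u < hi -> (forall w, lo < w < hi -> f w = frame e1 e2 (mkV (x w) (y w) (z w))) ->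
  derivable_pt_lim x u x' -> derivable_pt_lim y u y' -> derivable_pt_lim z u z' ->
  has_vderiv f u d -> d = frame e1 e2 (mkV x' y' z').
Proof.
  intros Hu Hf Hx Hy Hz (Dx & Dy & Dz).
  assert (Hcomp : forall (F : R -> R) (k1 k2 k3 l : R),
    (forall w, lo < w < hi -> F w = x w * k1 + y w * k2 + z w * k3) ->
    derivable_pt_lim F u l -> l = x' * k1 + y' * k2 + z' * k3).
  { intros F k1 k2 k3 l HF DF.
    apply (derivable_pt_lim_unique_on lo hi u _ _ F _ Hu HF DF).
    apply (derivable_pt_lim_plus (fun w => x w * k1 + y w * k2) (fun w => z w * k3));
      [apply (derivable_pt_lim_plus (fun w => x w * k1) (fun w => y w * k2)) |];
      now apply derivable_pt_lim_mul_const. }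
  apply V3_eq;
    [apply (Hcomp (fun w => vx (f w))) | apply (Hcomp (fun w => vy (f w)))
    | apply (Hcomp (fun w => vz (f w)))];
    try assumption; intros w Hw; rewrite (Hf w Hw); reflexivity.
Qed.

(** * Surfaces of Riemann type *)

Lemma riemann_X_frame (a b r : R -> R) (e1 e2 : V3) (s t : R) :
  riemann_X a b r e1 e2 s t = frame e1 e2 (mkV (a s + r s * cos t) (b s + r s * sin t) s).
Proof. apply V3_eq; unfold riemann_X, riemann_center, frame, vadd, vscale; simpl; ring. Qed.

Section RiemannType.

Variables (e1 e2 : V3) (Da Db Dr : nat -> R -> R) (s0 s1 t0 t1 p q g : R).
Variables Xs Xt Xss Xst Xtt : R -> R -> V3.

Hypotheses (he1 : dot e1 e1 = 1) (he2 : dot e2 e2 = 1) (he12 : dot e1 e2 = 0).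
Local Notation a := (Da O).
Local Notation b := (Db O).
Local Notation r := (Dr O).
Local Notation a' := (Da 1%nat).
Local Notation b' := (Db 1%nat).
Local Notation r' := (Dr 1%nat).
Local Notation a'' := (Da 2%nat).
Local Notation b'' := (Db 2%nat).
Local Notation r'' := (Dr 2%nat).

Hypothesis hDa : forall n x, s0 < x < s1 -> derivable_pt_lim (Da n) x (Da (S n) x).
Hypothesis hDb : forall n x, s0 < x < s1 -> derivable_pt_lim (Db n) x (Db (S n) x).
Hypothesis hDr : forall n x, s0 < x < s1 -> derivable_pt_lim (Dr n) x (Dr (S n) x).
Hypothesis hr : forall s, s0 < s < s1 -> 0 < r s.
Hypothesis hs : s0 < s1.
Hypothesis ht : t0 < t1.
Hypothesis hpqg : ~ (p = 0 /\ q = 0 /\ g = 0).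
Hypothesis hX : forall s t, s0 < s < s1 -> t0 < t < t1 ->
  pd_s (riemann_X a b r e1 e2) Xs s t /\ pd_t (riemann_X a b r e1 e2) Xt s t /\
  pd_s Xs Xss s t /\ pd_t Xs Xst s t /\ pd_t Xt Xtt s t /\
  cross (Xs s t) (Xt s t) <> vzero /\
  phi_mean_curv (frame e1 e2 (mkV p q g)) (Xs s t) (Xt s t) (Xss s t) (Xst s t) (Xtt s t) = 0.

Ltac trig_derive := apply is_derive_Reals; auto_derive; [exact I | ring].

Lemma riemann_Xs (s t : R) : s0 < s < s1 -> t0 < t < t1 ->
  Xs s t = frame e1 e2 (mkV (a' s + r' s * cos t) (b' s + r' s * sin t) 1).
Proof.
  intros Hs Ht. destruct (hX s t Hs Ht) as [HXs _].
  apply (has_vderiv_frame_unique e1 e2 s0 s1 s (fun s' => riemann_X a b r e1 e2 s' t)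
    (fun s' => a s' + r s' * cos t) (fun s' => b s' + r s' * sin t) (fun s' => s'));
    [exact Hs | intros; apply riemann_X_frame | | | apply derivable_pt_lim_id | exact HXs];
    apply derivable_pt_lim_add_mul; auto.
Qed.

Lemma riemann_Xt (s t : R) : s0 < s < s1 -> t0 < t < t1 ->
  Xt s t = frame e1 e2 (mkV (- (r s * sin t)) (r s * cos t) 0).
Proof.
  intros Hs Ht. destruct (hX s t Hs Ht) as (_ & HXt & _).
  apply (has_vderiv_frame_unique e1 e2 t0 t1 t (fun t' => riemann_X a b r e1 e2 s t')
    (fun t' => a s + r s * cos t') (fun t' => b s + r s * sin t') (fun _ => s));
    [exact Ht | intros; apply riemann_X_frame | trig_derive | trig_derive
    | apply derivable_pt_lim_const | exact HXt].
Qed.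

Lemma riemann_Xss (s t : R) : s0 < s < s1 -> t0 < t < t1 ->
  Xss s t = frame e1 e2 (mkV (a'' s + r'' s * cos t) (b'' s + r'' s * sin t) 0).
Proof.
  intros Hs Ht. destruct (hX s t Hs Ht) as (_ & _ & HXss & _).
  apply (has_vderiv_frame_unique e1 e2 s0 s1 s (fun s' => Xs s' t)
    (fun s' => a' s' + r' s' * cos t) (fun s' => b' s' + r' s' * sin t) (fun _ => 1));
    [exact Hs | intros; now apply riemann_Xs | | | apply derivable_pt_lim_const | exact HXss];
    apply derivable_pt_lim_add_mul; auto.
Qed.

Lemma riemann_Xst (s t : R) : s0 < s < s1 -> t0 < t < t1 ->
  Xst s t = frame e1 e2 (mkV (- (r' s * sin t)) (r' s * cos t) 0).
Proof.
  intros Hs Ht. destruct (hX s t Hs Ht) as (_ & _ & _ & HXst & _).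
  apply (has_vderiv_frame_unique e1 e2 t0 t1 t (fun t' => Xs s t')
    (fun t' => a' s + r' s * cos t') (fun t' => b' s + r' s * sin t') (fun _ => 1));
    [exact Ht | intros; now apply riemann_Xs | trig_derive | trig_derive
    | apply derivable_pt_lim_const | exact HXst].
Qed.

Lemma riemann_Xtt (s t : R) : s0 < s < s1 -> t0 < t < t1 ->
  Xtt s t = frame e1 e2 (mkV (- (r s * cos t)) (- (r s * sin t)) 0).
Proof.
  intros Hs Ht. destruct (hX s t Hs Ht) as (_ & _ & _ & _ & HXtt & _).
  apply (has_vderiv_frame_unique e1 e2 t0 t1 t (fun t' => Xt s t')
    (fun t' => - (r s * sin t')) (fun t' => r s * cos t') (fun _ => 0));
    [exact Ht | intros; now apply riemann_Xt | trig_derive | trig_derive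
    | apply derivable_pt_lim_const | exact HXtt].
Qed.

Lemma riemann_fourier_eq0 (s : R) : s0 < s < s1 ->
  fourier_c0 (r s) (r' s) (r'' s) (a' s) (b' s) p q g = 0 /\
  fourier_c1 (r s) (r' s) (a' s) (a'' s) (b' s) p q g = 0 /\
  fourier_s1 (r s) (r' s) (a' s) (b' s) (b'' s) p q g = 0 /\
  fourier_c2 (r s) (r' s) (a' s) (b' s) p q g = 0 /\
  fourier_s2 (r s) (r' s) (a' s) (b' s) p q g = 0 /\
  fourier_c3 (r s) (a' s) (b' s) p q g = 0 /\
  fourier_s3 (r s) (a' s) (b' s) p q g = 0.
Proof.
  intros Hs. apply (trig3_eq0 t0 t1); [exact ht |]. intros t Ht.
  destruct (hX s t Hs Ht) as (_ & _ & _ & _ & _ & Hc & Hphi).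
  rewrite (riemann_Xs s t Hs Ht), (riemann_Xt s t Hs Ht) in Hc, Hphi.
  rewrite (riemann_Xss s t Hs Ht), (riemann_Xst s t Hs Ht), (riemann_Xtt s t Hs Ht),
    (phi_mean_curv_frame e1 e2 he1 he2 he12) in Hphi.
  rewrite (cross_frame e1 e2 he1 he2 he12) in Hc.
  assert (Hc' : cross (mkV (a' s + r' s * cos t) (b' s + r' s * sin t) 1)
                      (mkV (- (r s * sin t)) (r s * cos t) 0) <> vzero).
  { intros E. apply Hc. rewrite E. apply frame_vzero. }
  pose proof (phi_mean_curv_eq0_numerator _ _ _ _ _ _ Hc' Hphi) as HN.
  rewrite phi_mean_numerator_circle, riemann_phi_poly_trig3 in HN.
  - pose proof (hr s Hs).
    apply Rmult_integral in HN as [H0 | H0]; [nra | exact H0].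
  - pose proof (sin2_cos2 t) as H. unfold Rsqr in H. lra.
Qed.

Lemma riemann_centre_fixed (s : R) : s0 < s < s1 -> a' s = 0 /\ b' s = 0.
Proof.
  assert (Hprod : vanishes_on s0 s1 (fun y => (a' y ^ 2 + b' y ^ 2) * r' y)).
  { intros y Hy. destruct (riemann_fourier_eq0 y Hy) as (_ & _ & _ & H2 & H2' & H3 & H3').
    exact (fourier_high_eq0 _ _ _ _ _ _ _ (hr y Hy) hpqg H2 H2' H3 H3'). }
  assert (Hprod' : vanishes_on s0 s1 (fun y =>
    (2 * a' y * a'' y + 2 * b' y * b'' y) * r' y + (a' y ^ 2 + b' y ^ 2) * r'' y)).
  { apply (vanishes_on_deriv _ _ _ _ Hprod). intros y Hy.
    pose proof (proj2 (is_derive_Reals _ _ _) (hDa 1%nat y Hy)) as Ha.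
    pose proof (proj2 (is_derive_Reals _ _ _) (hDb 1%nat y Hy)) as Hb.
    pose proof (proj2 (is_derive_Reals _ _ _) (hDr 1%nat y Hy)) as Hr.
    apply is_derive_Reals. auto_derive.
    - repeat split; eexists; eassumption.
    - repeat erewrite is_derive_unique by eassumption. ring. }
  intros Hs.
  destruct (Req_dec (a' s ^ 2 + b' s ^ 2) 0) as [h | h]; [split; nra | exfalso].
  pose proof (Hprod s Hs) as H0. pose proof (Hprod' s Hs) as H1. cbv beta in H0, H1.
  apply Rmult_integral in H0 as [H0 | Hr1]; [contradiction |].
  rewrite Hr1, Rmult_0_r, Rplus_0_l in H1.
  apply Rmult_integral in H1 as [H1 | Hr2]; [contradiction |].
  destruct (riemann_fourier_eq0 s Hs) as (Hc0 & _).
  rewrite Hr1, Hr2, fourier_c0_stationary_radius in Hc0. nra.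
Qed.

Lemma riemann_density_normal : p = 0 /\ q = 0.
Proof.
  set (m := (s0 + s1) / 2). assert (Hm : s0 < m < s1) by (unfold m; lra).
  assert (Ha' : vanishes_on s0 s1 a') by (intros y Hy; apply riemann_centre_fixed, Hy).
  assert (Hb' : vanishes_on s0 s1 b') by (intros y Hy; apply riemann_centre_fixed, Hy).
  pose proof (vanishes_on_deriv _ _ _ _ Ha' (hDa 1%nat) m Hm) as Ha''.
  pose proof (vanishes_on_deriv _ _ _ _ Hb' (hDb 1%nat) m Hm) as Hb''.
  destruct (riemann_fourier_eq0 m Hm) as (_ & Hc1 & Hs1 & _).
  rewrite (Ha' m Hm), (Hb' m Hm), Ha'', fourier_c1_fixed_centre in Hc1.
  rewrite (Ha' m Hm), (Hb' m Hm), Hb'', fourier_s1_fixed_centre in Hs1.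
  pose proof (hr m Hm).
  assert (0 < r m * (1 + r' m ^ 2)) by nra.
  split; [apply Rmult_integral in Hc1 | apply Rmult_integral in Hs1]; intuition lra.
Qed.

Lemma riemann_centre_const (s s' : R) : s0 < s < s1 -> s0 < s' < s1 ->
  a s = a s' /\ b s = b s'.
Proof.
  intros Hs Hs'. split;
    [apply (null_derivative_on s0 s1 _ _ (hDa O)) | apply (null_derivative_on s0 s1 _ _ (hDb O))];
    auto; intros y Hy; apply (riemann_centre_fixed y Hy).
Qed.

End RiemannType.

Theorem theorem2 (alpha beta gamma : R)
  (hv : ~ (alpha = 0 /\ beta = 0 /\ gamma = 0))
  (w e1 e2 : V3) (s0 s1 t0 t1 : R) (a b r : R -> R)
  (hs : s0 < s1) (ht : t0 < t1)
  (hw : w <> vzero)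
  (he1 : dot e1 e1 = 1) (he2 : dot e2 e2 = 1) (he12 : dot e1 e2 = 0)
  (hw1 : dot e1 w = 0) (hw2 : dot e2 w = 0)
  (ha : smooth_on a s0 s1) (hb : smooth_on b s0 s1) (hr : smooth_on r s0 s1)
  (hrpos : forall s, s0 < s < s1 -> 0 < r s)
  (hmin : phi_minimal_param (riemann_X a b r e1 e2) (mkV alpha beta gamma) s0 s1 t0 t1) :
  (exists lam : R, w = vscale lam (mkV alpha beta gamma)) /\
  (exists p : V3, forall s, s0 < s < s1 ->
     exists mu : R, riemann_center a b e1 e2 s = vadd p (vscale mu (mkV alpha beta gamma))).
Proof.
  destruct ha as (Da & <- & hDa), hb as (Db & <- & hDb), hr as (Dr & <- & hDr).
  destruct hmin as (Xs & Xt & Xss & Xst & Xtt & hX).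
  set (v := mkV alpha beta gamma) in *.
  set (p := dot v e1). set (q := dot v e2). set (g := dot v (cross e1 e2)).
  assert (Hv : v = frame e1 e2 (mkV p q g)) by now apply frame_coords.
  rewrite Hv in hX.
  assert (Hpqg : ~ (p = 0 /\ q = 0 /\ g = 0)).
  { intros (-> & -> & ->). apply hv.
    assert (E : v = vzero) by (rewrite Hv; apply frame_vzero).
    injection E; auto. }
  destruct (riemann_density_normal e1 e2 Da Db Dr s0 s1 t0 t1 p q g Xs Xt Xss Xst Xtt)
    as [Hp Hq]; auto.
  assert (Hg : g <> 0) by (intros Hg; apply Hpqg; auto).
  rewrite Hv, Hp, Hq.
  split.
  - exists (dot w (cross e1 e2) / g).
    rewrite (frame_coords e1 e2 he1 he2 he12 w) at 1. rewrite vscale_frame.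
    f_equal. apply V3_eq; unfold dot in *; simpl; [lra | lra | field; exact Hg].
  - set (m := (s0 + s1) / 2). assert (Hm : s0 < m < s1) by (unfold m; lra).
    exists (frame e1 e2 (mkV (Da O m) (Db O m) 0)). intros s Hs. exists (s / g).
    destruct (riemann_centre_const e1 e2 Da Db Dr s0 s1 t0 t1 p q g Xs Xt Xss Xst Xtt)
      with (s := s) (s' := m) as [Ha Hb]; auto.
    unfold riemann_center. rewrite Ha, Hb.
    apply V3_eq; unfold frame, vadd, vscale; simpl; field; exact Hg.
Qed.
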